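(* Let $K$ be a field, $n\ge2$, regard $M_n(K)$ as a left $M_n(K)$-module via left multiplication, and for $X\in M_n(K)$ let $H_X=\{A\in M_n(K): \operatorname{Tr}(AX)=0\}$. Then for every $X\in M_n(K)$ and every choice of $\vartheta$: (i) if $\operatorname{char}K=0$ or $\operatorname{char}K=p>n$, then \[ \sigma_\vartheta(H_X)=\{Y\in M_n(K): YX=0\},\qquad \tau_\vartheta(H_X)=\{Y\in M_n(K): YX=0\ \text{or}\ YX=\lambda I_n\text{ for some }\lambda\in K\setminus\{0\}\}; \] (ii) if $\operatorname{char}K=p>0$ with $p\le n$, then $\sigma_\vartheta(H_X)=\tau_\vartheta(H_X)=\{Y\in M_n(K): YX=0\}$.
   Context: $I_n$ is the identity matrix and $\operatorname{Tr}$ the trace. For an associative unital algebra $\mathcal A$ over a field $K$, the symbol $\vartheta$ ranges over ''left'', ''right'', ''pre-two-sided'', ''two-sided''. A subspace $J\subseteq\mathcal A$ is a left (resp. right; two-sided) Mathieu subspace of $\mathcal A$ if whenever $a\in\mathcal A$ satisfies $a^m\in J$ for all $m\ge1$, then for all $b,c\in\mathcal A$ there is $N_0$ with $ba^m\in J$ (resp. $a^mc\in J$; $ba^mc\in J$) for all $m\ge N_0$; pre-two-sided means both left and right. A $\vartheta$-ideal means a left/right/two-sided ideal accordingly, and a two-sided ideal for $\vartheta$ = pre-two-sided. For a left $\mathcal A$-module $\mathcal M$, $u\in\mathcal M$, $N\subseteq \mathcal M$, $(N:u)=\{a\in\mathcal A: au\in N\}$; for a subspace $N$, $\sigma_\vartheta(N)=\{u\in\mathcal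 M: (N:u)\text{ is a }\vartheta\text{-ideal of }\mathcal A\}$, $\tau_\vartheta(N)=\{u\in\mathcal M: (N:u)\text{ is a }\vartheta\text{-Mathieu subspace of }\mathcal A\}$. *)

From HB Require Import structures.
From mathcomp Require Import all_boot all_order all_algebra.
Set Implicit Arguments. Unset Strict Implicit. Unset Printing Implicit Defensive.
Import GRing.Theory.
Local Open Scope ring_scope.

Inductive theta := Left | Right | PreTwoSided | TwoSided.

Definition is_left_ideal (A : pzRingType) (J : A -> Prop) : Prop :=
  J 0 /\ (forall x y, J x -> J y -> J (x + y)) /\ (forall b x, J x -> J (b * x)).
Definition is_right_ideal (A : pzRingType) (J : A -> Prop) : Prop :=
  J 0 /\ (forall x y, J x -> J y -> J (x + y)) /\ (forall c x, J x -> J (x * c)).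
Definition is_twosided_ideal (A : pzRingType) (J : A -> Prop) : Prop :=
  is_left_ideal J /\ is_right_ideal J.

Definition is_theta_ideal (th : theta) (A : pzRingType) (J : A -> Prop) : Prop :=
  match th with
  | Left => is_left_ideal J
  | Right => is_right_ideal J
  | PreTwoSided | TwoSided => is_twosided_ideal J
  end.

Definition is_left_Mathieu (A : pzRingType) (J : A -> Prop) : Prop :=
  forall a : A, (forall m : nat, (1 <= m)%N -> J (a ^+ m)) ->
    forall b : A, exists N0 : nat, forall m : nat, (N0 <= m)%N -> J (b * a ^+ m).
Definition is_right_Mathieu (A : pzRingType) (J : A -> Prop) : Prop :=
  forall a : A, (forall m : nat, (1 <= m)%N -> J (a ^+ m)) ->
    forall c : A, exists N0 : nat, forall m : nat, (N0 <= m)%N -> J (a ^+ m * c).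
Definition is_twosided_Mathieu (A : pzRingType) (J : A -> Prop) : Prop :=
  forall a : A, (forall m : nat, (1 <= m)%N -> J (a ^+ m)) ->
    forall b c : A, exists N0 : nat, forall m : nat, (N0 <= m)%N -> J (b * a ^+ m * c).

Definition is_theta_Mathieu (th : theta) (A : pzRingType) (J : A -> Prop) : Prop :=
  match th with
  | Left => is_left_Mathieu J
  | Right => is_right_Mathieu J
  | PreTwoSided => is_left_Mathieu J /\ is_right_Mathieu J
  | TwoSided => is_twosided_Mathieu J
  end.

(* The algebra A regarded as a left A-module via left multiplication:
   (N : u) = { a | a u \in N }. *)
Definition colon (A : pzRingType) (N : A -> Prop) (u : A) : A -> Prop :=
  fun a => N (a * u).

Definition sigma_theta (th : theta) (A : pzRingType) (N : A -> Prop) : A -> Prop :=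
  fun u => is_theta_ideal th (colon N u).
Definition tau_theta (th : theta) (A : pzRingType) (N : A -> Prop) : A -> Prop :=
  fun u => is_theta_Mathieu th (colon N u).

Definition H_ (K : fieldType) (n : nat) (X : 'M[K]_n.+1) : 'M[K]_n.+1 -> Prop :=
  fun A => \tr (A * X) = 0.

From Stdlib Require Import FunctionalExtensionality.
From HB Require Import structures.
From mathcomp Require Import all_boot all_order all_algebra ring.
Set Implicit Arguments. Unset Strict Implicit. Unset Printing Implicit Defensive.
Import GRing.Theory.
Local Open Scope ring_scope.

(* Since [colon (H_ X) Y = H_ (Y * X)], everything is about the trace hyperplane
   [H_ Z] of a single matrix [Z].  Every theta-condition implies a left or a right
   one, and transposition turns right conditions on [H_ Z] into left ones on
   [H_ Z^T].  If [H_ Z] is left Mathieu, an idempotent [e] of [H_ Z] has all its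
   powers equal to [e], so [tr (b e Z) = 0] for all [b], i.e. [e Z = 0]; applied
   to the rank-one idempotents [u w] with [w Z u = 0] this forces [Z] to be scalar.
   A nonzero scalar [l%:M] never gives an ideal.  It gives a Mathieu subspace iff
   matrices with traceless powers are nilpotent, which holds when [char K] is [0]
   or exceeds [n]; when [char K = p <= n] the idempotent [pid_mx p] has trace
   [p = 0] but [pid_mx p * l%:M != 0]. *)

Section ThetaSubspaces.

Variables (A : pzRingType) (J : A -> Prop).

Lemma theta_ideal_left_or_right th :
  is_theta_ideal th J -> is_left_ideal J \/ is_right_ideal J.
Proof. by case: th => /= [?|?|[? _]|[? _]]; [left|right|left|left]. Qed.

Lemma theta_Mathieu_left_or_right th :
  is_theta_Mathieu th J -> is_left_Mathieu J \/ is_right_Mathieu J.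
Proof.
case: th => /= [?|?|[? _]|JM]; [by left|by right|by left|left].
move=> a Ja b; have [N0 JN] := JM a Ja b 1.
by exists N0 => m /JN; rewrite mulr1.
Qed.

Lemma theta_ideal_Mathieu th : is_theta_ideal th J -> is_theta_Mathieu th J.
Proof.
have L : is_left_ideal J -> is_left_Mathieu J.
  by move=> [_ [_ JL]] a Ja b; exists 1%N => m /Ja /JL.
have R : is_right_ideal J -> is_right_Mathieu J.
  by move=> [_ [_ JR]] a Ja c; exists 1%N => m /Ja /JR.
case: th => /= [/L|/R|[/L ? /R ?]|[[_ [_ JL]] [_ [_ JR]]]] //.
by move=> a Ja b c; exists 1%N => m /Ja /(JL b) /(JR c).
Qed.

Lemma nil_theta_Mathieu th :
  J 0 -> (forall a, (forall m, (1 <= m)%N -> J (a ^+ m)) -> exists N, a ^+ N = 0) ->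
  is_theta_Mathieu th J.
Proof.
move=> J0 Jnil.
have eventually0 a : (forall m, (1 <= m)%N -> J (a ^+ m)) ->
    exists N, forall m, (N <= m)%N -> a ^+ m = 0.
  move=> /Jnil[N aN]; exists N => m leNm.
  by rewrite -(subnKC leNm) exprD aN mul0r.
have L : is_left_Mathieu J.
  by move=> a /eventually0[N aN] b; exists N => m /aN ->; rewrite mulr0.
have R : is_right_Mathieu J.
  by move=> a /eventually0[N aN] c; exists N => m /aN ->; rewrite mul0r.
case: th => //=.
by move=> a /eventually0[N aN] b c; exists N => m /aN ->; rewrite mulr0 mul0r.
Qed.

End ThetaSubspaces.

Section Trace.

Variables (K : fieldType) (n : nat).
Local Notation M := 'M[K]_n.+1.

Lemma mxtrace_delta_mul (i j : 'I_n.+1) (W : M) : \tr (delta_mx j i * W) = W i j.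
Proof.
rewrite /mxtrace (bigD1 j) //= big1 => [|k kj]; last first.
  by rewrite !mxE big1 // => l _; rewrite mxE (negbTE kj) mul0r.
rewrite !mxE (bigD1 i) //= big1 => [|l li]; last by rewrite mxE (negbTE li) andbF mul0r.
by rewrite !mxE !eqxx mul1r !addr0.
Qed.

Lemma mxtrace_mull_eq0 (W : M) : (forall b, \tr (b * W) = 0) -> W = 0.
Proof. by move=> trW0; apply/matrixP => i j; rewrite -mxtrace_delta_mul trW0 mxE. Qed.

Lemma mxtrace_pid_mx r : (r <= n.+1)%N -> \tr (pid_mx r : M) = r%:R.
Proof.
move=> le_r; rewrite /mxtrace (eq_bigr (fun i : 'I_n.+1 => ((i < r)%N)%:R)); last first.
  by move=> i _; rewrite mxE eqxx.
rewrite -(big_mkord xpredT (fun i => ((i < r)%N)%:R : K)) (big_cat_nat (leq0n r) le_r) /=.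
have -> : \sum_(r <= i < n.+1) ((i < r)%N)%:R = 0 :> K.
  by rewrite big_nat_cond big1 // => i /andP[/andP[le_ri _] _]; rewrite ltnNge le_ri.
rewrite addr0 big_nat_cond (eq_bigr (fun=> 1)); last by move=> i /andP[/andP[_ ->]].
by rewrite -big_nat_cond sumr_const_nat subn0.
Qed.

Lemma mxtrace_idem (F : M) : F * F = F -> \tr F = (\rank F)%:R.
Proof.
move=> FF; have eb := mulmx_ebase F.
set L := col_ebase F in eb; set U := row_ebase F in eb; set P := pid_mx _ in eb.
have Lu : L \in unitmx by apply: col_ebase_unit.
have Uu : U \in unitmx by apply: row_ebase_unit.
have PULP : P *m (U *m L) *m P = P.
  have : L *m P *m U *m (L *m P *m U) = L *m P *m U by rewrite eb mulmxE FF.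
  move/(congr1 (fun B => invmx L *m B *m invmx U)).
  by rewrite /= !mulmxA !mulmxK // !mulVmx // !mul1mx.
have PP : P *m P = P by apply: pid_mx_id; apply: rank_leq_row.
rewrite -[in LHS]eb -mulmxA mxtrace_mulC -mulmxA -[in LHS]PP -mulmxA mxtrace_mulC.
by rewrite !mulmxA -(mulmxA P) PULP mxtrace_pid_mx ?rank_leq_row.
Qed.

Lemma mxtrace_horner_mx (a : M) (f : {poly K}) :
  (forall j, (0 < j)%N -> \tr (a ^+ j) = 0) -> \tr (horner_mx a f) = f`_0 * n.+1%:R.
Proof.
move=> tr_pow0.
rewrite -[f in horner_mx _ f]coefK poly_def rmorph_sum raddf_sum /=.
under eq_bigr => i _ do rewrite linearZ /= rmorphXn /= horner_mx_X mxtraceZ.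
rewrite -(big_mkord xpredT (fun i => f`_i * \tr (a ^+ i))).
case sz_f: (size f) => [|s]; first by rewrite big_geq // nth_default ?mul0r ?sz_f.
rewrite big_nat_recl // big1 => [|i _]; last by rewrite tr_pow0 ?mulr0.
by rewrite addr0 expr0 mxtrace1.
Qed.

Hypothesis natr_neq0 : forall k, (0 < k <= n.+1)%N -> k%:R != 0 :> K.

Lemma mxtrace_idem_eq0 (F : M) : F * F = F -> \tr F = 0 -> F = 0.
Proof.
move=> FF; rewrite mxtrace_idem // => /eqP rkF0; apply/eqP; rewrite -mxrank_eq0.
by apply: contraLR rkF0; rewrite -lt0n => rk_gt0; apply: natr_neq0; rewrite rk_gt0 rank_leq_row.
Qed.

(* Write [char_poly a = q * 'X^k] with [q.[0] != 0] and split [K[a]] by the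
   Bezout idempotents of the coprime factors [q] and ['X^(k.+1)]: the idempotent
   attached to ['X^(k.+1)] has a polynomial with no constant term, hence is
   traceless, hence vanishes, and then [a^k.+1] is killed by [char_poly a]. *)
Lemma traceless_powers_nilpotent (a : M) :
  (forall j, (0 < j)%N -> \tr (a ^+ j) = 0) -> exists N, a ^+ N = 0.
Proof.
move=> tr_pow0; set p := char_poly a.
have pa0 : horner_mx a p = 0 by apply: Cayley_Hamilton.
have [k [q q0 Dp]] := multiplicity_XsubC p 0.
rewrite monic_neq0 ?char_poly_monic //= polyC0 subr0 in q0 Dp.
have [[u v] /= uv1] : exists uv : {poly K} * {poly K}, uv.1 * q + uv.2 * 'X^(k.+1) = 1.
  apply/Bezout_eq1_coprimepP/coprimep_expr.
  by rewrite -(subr0 'X) -polyC0 coprimep_XsubC.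
set E := horner_mx a (u * q); set F := horner_mx a (v * 'X^(k.+1)).
have EF1 : E + F = 1 by rewrite -rmorphD /= uv1 rmorph1.
have FE0 : F * E = 0.
  rewrite /E /F -rmorphM /=.
  have -> : v * 'X^(k.+1) * (u * q) = u * v * 'X * p by rewrite Dp exprSr; ring.
  by rewrite rmorphM /= pa0 mulr0.
have FF : F * F = F by have := congr1 (fun B => F * B) EF1; rewrite mulrDr FE0 add0r mulr1.
have F0 : F = 0 by apply: mxtrace_idem_eq0; rewrite // /F mxtrace_horner_mx // coefMXn mul0r.
exists k.+1; have -> : a ^+ k.+1 = a ^+ k.+1 * (E + F) by rewrite EF1 mulr1.
rewrite F0 addr0 /E -{1}(horner_mx_X a) -rmorphXn -rmorphM /=.
have -> : 'X^(k.+1) * (u * q) = u * 'X * p by rewrite Dp exprSr; ring.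
by rewrite rmorphM /= pa0 mulr0.
Qed.

End Trace.

Section TraceHyperplane.
Variables (K : fieldType) (n : nat).
Local Notation M := 'M[K]_n.+1.

Lemma delta_mulmx_delta (i j : 'I_n.+1) (B : M) :
  (delta_mx 0 i : 'rV_n.+1) *m B *m (delta_mx j 0 : 'cV_n.+1) = (B i j)%:M.
Proof. by rewrite -rowE -colE; apply/matrixP => a b; rewrite !ord1 !mxE eqxx mulr1n. Qed.

Lemma delta_mx11 : delta_mx 0 0 = 1%:M :> 'M[K]_1.
Proof. by apply/matrixP => a b; rewrite !ord1 !mxE. Qed.

Section RankOneTest.
Variable Z : M.
Hypothesis rank_one_test :
  forall (u : 'cV[K]_n.+1) (w : 'rV[K]_n.+1), w *m u = 1%:M -> w *m Z *m u = 0 -> w *m Z = 0.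

Lemma rank_one_test_offdiag (i j : 'I_n.+1) : i != j -> Z i j = 0.
Proof.
move=> ij; apply/eqP/negP => /negP Zij0.
set c := Z i i / Z i j.
have /matrixP/(_ 0 j) : (delta_mx 0 i : 'rV_n.+1) *m Z = 0.
  apply: (rank_one_test (u := delta_mx i 0 - c *: delta_mx j 0)).
    by rewrite mulmxBr -scalemxAr !mul_delta_mx_cond eqxx (negbTE ij) scaler0 subr0 delta_mx11.
  by rewrite mulmxBr -scalemxAr !delta_mulmx_delta scale_scalar_mx /c divfK ?subrr.
by rewrite -rowE !mxE; apply/eqP.
Qed.

Lemma rank_one_test_diag (i j : 'I_n.+1) : Z i i = Z j j.
Proof.
have [-> // | ij] := eqVneq i j.
have ji : j != i by rewrite eq_sym.
apply/eqP; rewrite eq_sym -subr_eq0; apply/negPn/negP => d0.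
set d := Z j j - Z i i in d0; set a := Z j j / d; set b := Z i i / d.
pose w : 'rV[K]_n.+1 := delta_mx 0 i + delta_mx 0 j.
have wBu (B : M) : w *m B *m (a *: delta_mx i 0 - b *: delta_mx j 0) =
    (a * (B i i + B j i) - b * (B i j + B j j))%:M.
  rewrite mulmxBr -!scalemxAr !mulmxDl !(delta_mulmx_delta i) !(delta_mulmx_delta j).
  by rewrite raddfB /= -!scale_scalar_mx !raddfD.
have /matrixP wZ0 : w *m Z = 0.
  apply: (rank_one_test (u := a *: delta_mx i 0 - b *: delta_mx j 0)).
    rewrite -[w]mulmx1 wBu !mxE !eqxx (negbTE ij) (negbTE ji) /=.
    by rewrite !addr0 !add0r !mulr1 -mulrBl divff.
  rewrite wBu (rank_one_test_offdiag ij) (rank_one_test_offdiag ji) addr0 add0r /a /b.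
  by rewrite !(mulrAC _ d^-1) (mulrC (Z i i)) subrr raddf0.
have := wZ0 0 i; have := wZ0 0 j; rewrite mulmxDl -!rowE !mxE.
rewrite (rank_one_test_offdiag ij) (rank_one_test_offdiag ji) addr0 add0r => Zjj0 Zii0.
by rewrite /d Zjj0 Zii0 subrr eqxx in d0.
Qed.

Lemma rank_one_test_scalar : is_scalar_mx Z.
Proof.
apply/is_scalar_mxP; exists (Z 0 0); apply/matrixP => i j; rewrite mxE.
have [<- | ij] := eqVneq i j; first by rewrite (rank_one_test_diag i 0) mulr1n.
by rewrite mulr0n (rank_one_test_offdiag ij).
Qed.

End RankOneTest.

Lemma is_scalar_mx_trmx (Z : M) : is_scalar_mx Z^T -> is_scalar_mx Z.
Proof. by move=> /is_scalar_mxP[c ZTc]; rewrite -[Z]trmxK ZTc tr_scalar_mx scalar_mx_is_scalar. Qed.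

Lemma trmxX (a : M) m : (a ^+ m)^T = a^T ^+ m.
Proof.
elim: m => [|m IHm]; first by rewrite !expr0 trmx1.
by rewrite exprS exprSr -mulmxE trmx_mul IHm mulmxE.
Qed.

Lemma colon_H (X Y : M) : colon (H_ X) Y = H_ (Y * X).
Proof. by apply: functional_extensionality => a; rewrite /colon /H_ mulrA. Qed.

Lemma H_0_theta_ideal th : is_theta_ideal th (H_ (0 : M)).
Proof.
have H0 (A : M) : H_ 0 A by rewrite /H_ mulr0 mxtrace0.
by case: th; do ?split; move=> *; apply: H0.
Qed.

Lemma H_trmx (Z A : M) : H_ Z^T A = H_ Z A^T.
Proof. by rewrite /H_ -mxtrace_tr -mulmxE trmx_mul trmxK mxtrace_mulC. Qed.

Lemma right_ideal_H_trmx (Z : M) : is_right_ideal (H_ Z) -> is_left_ideal (H_ Z^T).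
Proof.
move=> [H0 [HD HM]]; split; last split.
- by rewrite H_trmx trmx0.
- by move=> A B; rewrite !H_trmx raddfD; apply: HD.
- by move=> b A; rewrite !H_trmx -mulmxE trmx_mul mulmxE; apply: HM.
Qed.

Lemma right_Mathieu_H_trmx (Z : M) : is_right_Mathieu (H_ Z) -> is_left_Mathieu (H_ Z^T).
Proof.
move=> HM a Ha b; have [|N0 HN] := HM a^T _ b^T.
  by move=> m /Ha; rewrite H_trmx trmxX.
by exists N0 => m /HN; rewrite H_trmx -mulmxE trmx_mul mulmxE trmxX.
Qed.

Lemma left_Mathieu_H_idem (Z e : M) :
  is_left_Mathieu (H_ Z) -> e * e = e -> H_ Z e -> e * Z = 0.
Proof.
move=> HM ee He; have e_pow m : (0 < m)%N -> e ^+ m = e.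
  by case: m => // m _; elim: m => // m IHm; rewrite exprS IHm.
have He_pow m : (1 <= m)%N -> H_ Z (e ^+ m) by move/e_pow ->.
apply: mxtrace_mull_eq0 => b; have [N0 HN] := HM e He_pow b.
by have := HN (maxn N0 1) (leq_maxl _ _); rewrite /H_ e_pow ?leq_max ?orbT // mulrA.
Qed.

Lemma left_Mathieu_H_scalar (Z : M) : is_left_Mathieu (H_ Z) -> is_scalar_mx Z.
Proof.
move=> HM; apply: rank_one_test_scalar => u w wu1 wZu0.
have ee : (u *m w) * (u *m w) = u *m w by rewrite -mulmxE mulmxA -(mulmxA u) wu1 mulmx1.
have He : H_ Z (u *m w) by rewrite /H_ -mulmxE -mulmxA mxtrace_mulC wZu0 mxtrace0.
have := congr1 (mulmx w) (left_Mathieu_H_idem HM ee He).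
by rewrite -mulmxE -mulmxA mulmxA wu1 mul1mx mulmx0.
Qed.

Lemma theta_Mathieu_H_scalar th (Z : M) : is_theta_Mathieu th (H_ Z) -> is_scalar_mx Z.
Proof.
case/theta_Mathieu_left_or_right => [/left_Mathieu_H_scalar // | /right_Mathieu_H_trmx].
by move/left_Mathieu_H_scalar/is_scalar_mx_trmx.
Qed.

Lemma left_ideal_H_scalar (l : K) : (0 < n)%N -> is_left_ideal (H_ (l%:M : M)) -> l = 0.
Proof.
move=> n_gt0 [_ [_ HM]]; pose i1 : 'I_n.+1 := inord 1.
have i10 : i1 != 0 by rewrite -(inj_eq val_inj) /= inordK.
have HA : H_ (l%:M : M) (delta_mx 0 i1) by rewrite /H_ mxtrace_delta_mul mxE (negbTE i10).
have := HM (delta_mx i1 0) _ HA; rewrite /H_ -mulmxE mul_delta_mx mulmxE.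
by rewrite mxtrace_delta_mul mxE eqxx.
Qed.

Lemma theta_ideal_H_eq0 th (Z : M) : (0 < n)%N -> is_theta_ideal th (H_ Z) -> Z = 0.
Proof.
move=> n_gt0 HI; have /is_scalar_mxP[l Zl] := theta_Mathieu_H_scalar (theta_ideal_Mathieu HI).
suff l0 : l = 0 by rewrite Zl l0 raddf0.
case/theta_ideal_left_or_right: HI => [|/right_ideal_H_trmx]; rewrite Zl ?tr_scalar_mx.
all: exact: left_ideal_H_scalar.
Qed.

Lemma left_Mathieu_H_scalar_pchar (l : K) p :
  p \in [pchar K] -> (p <= n.+1)%N -> is_left_Mathieu (H_ (l%:M : M)) -> l = 0.
Proof.
move=> pK le_pn HM; have p_gt0 := prime_gt0 (pcharf_prime pK).
have ee : pid_mx p * pid_mx p = pid_mx p :> M by rewrite -mulmxE pid_mx_id.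
have He : H_ (l%:M : M) (pid_mx p).
  by rewrite /H_ -mulmxE mul_mx_scalar mxtraceZ mxtrace_pid_mx // pcharf0 // mulr0.
have /matrixP/(_ 0 0) := left_Mathieu_H_idem HM ee He.
by rewrite -mulmxE mul_mx_scalar !mxE eqxx p_gt0 mulr1.
Qed.

Lemma theta_Mathieu_H_scalar_pchar th (l : K) p :
  p \in [pchar K] -> (p <= n.+1)%N -> is_theta_Mathieu th (H_ (l%:M : M)) -> l = 0.
Proof.
move=> pK le_pn /theta_Mathieu_left_or_right[|/right_Mathieu_H_trmx]; rewrite ?tr_scalar_mx.
all: exact: left_Mathieu_H_scalar_pchar pK le_pn.
Qed.

Lemma H_scalar_theta_Mathieu th (l : K) :
  (forall k, (0 < k <= n.+1)%N -> k%:R != 0 :> K) -> l != 0 ->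
  is_theta_Mathieu th (H_ (l%:M : M)).
Proof.
move=> natr_neq0 l0; apply: nil_theta_Mathieu => [|a Ha].
  by rewrite /H_ mul0r mxtrace0.
apply: traceless_powers_nilpotent => // m /Ha.
by rewrite /H_ -mulmxE mul_mx_scalar mxtraceZ => /eqP; rewrite mulf_eq0 (negbTE l0) => /eqP.
Qed.

End TraceHyperplane.

Lemma natr_neq0_pchar_gt (K : fieldType) n :
  (forall p, p \in [pchar K] -> (n < p)%N) -> forall k, (0 < k <= n)%N -> k%:R != 0 :> K.
Proof.
move=> pK_gt k /andP[k_gt0 le_kn]; apply/negP => k0.
have [p pK] := natf0_pchar k_gt0 k0.
have := pK_gt p pK; rewrite ltnNge => /negP; apply.
by apply: leq_trans le_kn; apply: dvdn_leq k_gt0 _; rewrite (dvdn_pcharf pK) k0.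
Qed.

Theorem proposition5p4 (K : fieldType) (n : nat) (hn : (2 <= n)%N)
    (X : 'M[K]_n.-1.+1) (th : theta) :
  ((forall p : nat, p \in [pchar K] -> (n < p)%N) ->
     (forall Y : 'M[K]_n.-1.+1, sigma_theta th (H_ X) Y <-> Y * X = 0) /\
     (forall Y : 'M[K]_n.-1.+1, tau_theta th (H_ X) Y <->
        (Y * X = 0 \/ exists lambda : K, lambda != 0 /\ Y * X = lambda%:M)))
  /\
  ((exists p : nat, p \in [pchar K] /\ (p <= n)%N) ->
     (forall Y : 'M[K]_n.-1.+1, sigma_theta th (H_ X) Y <-> Y * X = 0) /\
     (forall Y : 'M[K]_n.-1.+1, tau_theta th (H_ X) Y <-> Y * X = 0)).
Proof.
have n_pos : n.-1.+1 = n by rewrite prednK // ltnW.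
have sigma_H Y : sigma_theta th (H_ X) Y <-> Y * X = 0.
  rewrite /sigma_theta colon_H; split=> [|->]; last exact: H_0_theta_ideal.
  by apply: theta_ideal_H_eq0; rewrite -ltnS n_pos.
have tau_H0 Y : Y * X = 0 -> tau_theta th (H_ X) Y.
  by rewrite /tau_theta colon_H => ->; apply/theta_ideal_Mathieu/H_0_theta_ideal.
have tau_H_scalar Y : tau_theta th (H_ X) Y -> exists l, Y * X = l%:M.
  by rewrite /tau_theta colon_H => /theta_Mathieu_H_scalar/is_scalar_mxP.
split=> [pK_gt | [p [pK le_pn]]]; split=> // Y; split.
- case/tau_H_scalar => l YXl; have [l0 | l0] := eqVneq l 0.
    by left; rewrite YXl l0 raddf0.
  by right; exists l.
- case=> [/tau_H0 // | [l [l0 YXl]]]; rewrite /tau_theta colon_H YXl.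
  by apply: H_scalar_theta_Mathieu l0; rewrite n_pos; apply: natr_neq0_pchar_gt.
- move=> HM; have [l YXl] := tau_H_scalar Y HM.
  move: HM; rewrite /tau_theta colon_H YXl => HM.
  by rewrite (theta_Mathieu_H_scalar_pchar pK _ HM) ?raddf0 ?n_pos.
- exact: tau_H0.
Qed.
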